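(* Let $b,n\in\mathbb N$ with $b\ge 2$. Let $m$ be a natural number that is antipalindromic in base $b^n$, with base-$b^n$ expansion $(m)_{b^n}=u_k\dots u_1u_0$ (so $u_j\in\{0,\dots,b^n-1\}$ and $m=\sum_{j=0}^k u_j b^{nj}$), and assume $u_k\ge b^{n-1}$. Then $m$ is also antipalindromic in base $b$ if and only if, for every $j\in\{0,1,\dots,k\}$, the base-$b$ expansion of $u_j$ padded with leading zeros to length exactly $n$ (i.e., the string $v_{j,n-1}\dots v_{j,1}v_{j,0}$ with $v_{j,i}\in\{0,\dots,b-1\}$ and $u_j=\sum_{i=0}^{n-1}v_{j,i}b^i$) is a palindrome, i.e., $v_{j,i}=v_{j,n-1-i}$ for all $i\in\{0,\dots,n-1\}$.
   Context: For an integer $B\ge 2$, every natural number $x$ has a unique base-$B$ expansion $x=a_\ell B^\ell+\dots+a_1B+a_0$ with $a_0,\dots,a_\ell\in\{0,1,\dots,B-1\}$ and $a_\ell\neq 0$, written $(x)_B=a_\ell\dots a_1a_0$. The number $x$ is antipalindromic in base $B$ if $a_j=B-1-a_{\ell-j}$ for all $j\in\{0,1,\dots,\ell\}$. A string $w_{n-1}\dots w_0$ is a palindrome if $w_i=w_{n-1-i}$ for all $i$. *)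

From mathcomp Require Import all_boot.
Set Implicit Arguments. Unset Strict Implicit. Unset Printing Implicit Defensive.

(* Little-endian base-B digit list a_0 :: a_1 :: ... :: a_l of x (no leading
   zeros, so the last entry a_l is nonzero); digits of 0 is [::].
   Fuel x suffices since each step divides by B >= 2. *)
Fixpoint digits_aux (fuel B x : nat) : seq nat :=
  match fuel with
  | 0 => [::]
  | f.+1 => if x == 0 then [::] else x %% B :: digits_aux f B (x %/ B)
  end.

Definition digits (B x : nat) : seq nat := digits_aux x B x.

Definition antipalindromic (B x : nat) : Prop :=
  let s := digits B x in
  forall j, j < size s -> nth 0 s j = B - 1 - nth 0 s (size s - 1 - j).

Definition padded_digits (B n x : nat) : seq nat :=
  mkseq (fun i => (x %/ B ^ i) %% B) n.

Definition palindrome (s : seq nat) : Prop :=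
  forall i, i < size s -> nth 0 s i = nth 0 s (size s - 1 - i).

From mathcomp Require Import all_boot.
From mathcomp Require Import zify.

(* Since b^n is a power of b, the base-b digits of m are the concatenation of
   the n-digit base-b expansions of its base-b^n digits u_j: digit n j + i of m
   is digit i of u_j.  The hypothesis u_k >= b^(n-1) says the top block has no
   leading zeros, so m has exactly n (k + 1) base-b digits and position n j + i
   is mirrored to n (k - j) + (n - 1 - i).  Antipalindromy in base b^n gives
   u_(k-j) = b^n - 1 - u_j, and subtracting from b^n - 1 complements each of the
   n base-b digits.  Hence the base-b condition at position n j + i reads
   v_(j,i) = v_(j,n-1-i). *)

Set Implicit Arguments.
Unset Strict Implicit.
Unset Printing Implicit Defensive.

Definition digit (B x i : nat) : nat := x %/ B ^ i %% B.

Lemma digit_lt B x i : 0 < B -> digit B x i < B.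
Proof. exact: ltn_pmod. Qed.

Lemma digit0n B i : digit B 0 i = 0.
Proof. by rewrite /digit div0n mod0n. Qed.

Lemma digitS B x i : digit B x i.+1 = digit B (x %/ B) i.
Proof. by rewrite /digit expnS divnMA. Qed.

Section Digits.

Variable B : nat.
Hypothesis B_gt1 : 1 < B.

Lemma digits_aux_fuel f f' x :
  x <= f -> x <= f' -> digits_aux f B x = digits_aux f' B x.
Proof.
elim: f f' x => [|f IHf] [|f'] x /=; rewrite ?leqn0.
- by [].
- by move=> /eqP->.
- by move=> _ /eqP->; case: (x == 0).
case: eqP => [//|/eqP x_neq0] x_le x_le'.
have x_div_lt : x %/ B < x by rewrite ltn_Pdiv // lt0n.
by rewrite (IHf f') //; lia.
Qed.

Lemma digitsE x : 0 < x -> digits B x = x %% B :: digits B (x %/ B).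
Proof.
case: x => // x _; rewrite /digits /=.
have x_div_lt : x.+1 %/ B < x.+1 by rewrite ltn_Pdiv.
rewrite (@digits_aux_fuel x (x.+1 %/ B)) //; lia.
Qed.

Lemma nth_digits x i : nth 0 (digits B x) i = digit B x i.
Proof.
elim: i x => [|i IHi] x; case: (posnP x) => [->|x_gt0]; rewrite ?digit0n //;
  rewrite digitsE //= ?IHi ?digitS //.
by rewrite /digit expn0 divn1.
Qed.

Lemma digits_bounds x :
  0 < x -> B ^ (size (digits B x)).-1 <= x < B ^ size (digits B x).
Proof.
elim/ltn_ind: x => x IHx x_gt0; rewrite digitsE //=.
case: (posnP (x %/ B)) => [q_eq0 | q_gt0].
  by rewrite q_eq0 /= expn0 expn1 x_gt0 -[B]mul1n -ltn_divLR ?q_eq0 // ltnW.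
have B_gt0 : 0 < B by apply: ltnW.
have /andP[lo hi] := IHx _ (ltn_Pdiv B_gt1 x_gt0) q_gt0.
move: lo hi; case: (size _) => [|s] /=; rewrite ?expn0; first lia.
by rewrite leq_divRL // ltn_divLR // -!expnSr => -> ->.
Qed.

Lemma size_digits_eq x s : B ^ s.-1 <= x < B ^ s -> size (digits B x) = s.
Proof.
move=> /andP[lo hi].
have x_gt0 : 0 < x by apply: leq_trans lo; rewrite expn_gt0 ltnW.
have /andP[lo' hi'] := digits_bounds x_gt0.
have : B ^ s.-1 < B ^ size (digits B x) by lia.
have : B ^ (size (digits B x)).-1 < B ^ s by lia.
rewrite !ltn_exp2l //; lia.
Qed.

End Digits.

Lemma digit_mod_exp b n y i :
  0 < b -> i < n -> digit b (y %% b ^ n) i = digit b y i.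
Proof.
move=> b_gt0 i_lt; have i_le := ltnW i_lt.
rewrite /digit divn_modl ?dvdn_exp2l // -expnB //.
by apply: modn_dvdm; rewrite dvdn_exp ?subn_gt0.
Qed.

Lemma digit_block b n x j i :
  0 < b -> i < n -> digit b x (n * j + i) = digit b (digit (b ^ n) x j) i.
Proof.
move=> b_gt0 i_lt; rewrite [digit (b ^ n) _ _]/digit digit_mod_exp //.
by rewrite /digit expnD expnM divnMA.
Qed.

Lemma complement_divn_eq d q x :
  0 < d -> x < q * d -> q * d - 1 - x = (q - 1 - x %/ d) * d + (d - 1 - x %% d).
Proof.
move=> d_gt0 x_lt; have r_lt : x %% d < d by rewrite ltn_pmod.
have a_lt : x %/ d < q by rewrite ltn_divLR.
rewrite {1}(divn_eq x d); move: (x %/ d) (x %% d) a_lt r_lt => a r a_lt r_lt.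
have [k ->] : exists k, q = a + 1 + k by exists (q - 1 - a); lia.
have -> : a + 1 + k - 1 - a = k by lia.
rewrite !mulnDl mul1n; lia.
Qed.

Lemma divn_complement d q x :
  0 < d -> x < q * d -> (q * d - 1 - x) %/ d = q - 1 - x %/ d.
Proof.
move=> d_gt0 x_lt; rewrite complement_divn_eq // divnMDl //.
rewrite [(d - 1 - _) %/ d]divn_small ?addn0 //.
by move: (x %% d) => r; lia.
Qed.

Lemma modn_complement d q x :
  0 < d -> x < q * d -> (q * d - 1 - x) %% d = d - 1 - x %% d.
Proof.
move=> d_gt0 x_lt; rewrite complement_divn_eq // modnMDl modn_small //.
by move: (x %% d) => r; lia.
Qed.

Lemma digit_complement b n u i :
  0 < b -> i < n -> u < b ^ n ->
  digit b (b ^ n - 1 - u) i = b - 1 - digit b u i.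
Proof.
move=> b_gt0 i_lt u_lt; rewrite /digit.
have pow_split : b ^ n = b ^ (n - i) * b ^ i by rewrite -expnD subnK 1?ltnW.
have pow_pred : b ^ (n - i) = b ^ (n - i).-1 * b.
  by rewrite -expnSr prednK ?subn_gt0.
have bi_gt0 : 0 < b ^ i by rewrite expn_gt0 b_gt0.
rewrite pow_split divn_complement -?pow_split // pow_pred modn_complement //.
by rewrite -pow_pred ltn_divLR // -pow_split.
Qed.

Lemma antipalindromic_mirror B x j :
  antipalindromic B x -> j < size (digits B x) ->
  nth 0 (digits B x) (size (digits B x) - 1 - j) = B - 1 - nth 0 (digits B x) j.
Proof. by move=> anti j_lt; rewrite anti ?subKn //; lia. Qed.

Lemma palindrome_padded_digitsP B n x :
  palindrome (padded_digits B n x) <->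
  forall i, i < n -> digit B x i = digit B x (n - 1 - i).
Proof.
rewrite /palindrome size_mkseq.
by split=> pal i i_lt; have := pal i i_lt; rewrite !nth_mkseq //; lia.
Qed.

Section PowerBase.

Variables b n m : nat.
Hypotheses (b_gt1 : 1 < b) (n_gt0 : 0 < n).
Hypothesis m_anti : antipalindromic (b ^ n) m.
Hypothesis top_digit_ge :
  b ^ (n - 1) <= nth 0 (digits (b ^ n) m) (size (digits (b ^ n) m) - 1).

Local Notation u := (nth 0 (digits (b ^ n) m)).
Local Notation K := (size (digits (b ^ n) m)).

Let b_gt0 : 0 < b. Proof. exact: ltnW. Qed.
Let bn_gt1 : 1 < b ^ n.
Proof. by apply: leq_trans b_gt1 _; rewrite -{1}(expn1 b) leq_exp2l. Qed.

Lemma size_digits_power_base : size (digits b m) = n * K.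
Proof.
have bn1_gt0 : 0 < b ^ (n - 1) by rewrite expn_gt0 b_gt0.
have K_gt0 : 0 < K.
  by move: top_digit_ge; case: (digits _ m) => //; rewrite nth_nil; lia.
have m_gt0 : 0 < m by move: K_gt0; case: m.
apply: size_digits_eq => //; have /andP[_ m_lt] := digits_bounds bn_gt1 m_gt0.
rewrite -expnM in m_lt; rewrite m_lt andbT.
have -> : (n * K).-1 = (n - 1) + n * (K - 1) by nia.
rewrite expnD expnM; apply: leq_trans (leq_divM m ((b ^ n) ^ (K - 1))).
rewrite leq_mul2r; apply/orP; right; apply: leq_trans top_digit_ge _.
by rewrite nth_digits // leq_mod.
Qed.

Lemma digit_mirror j i :
  j < K -> i < n ->
  digit b m (n * K - 1 - (n * j + i)) = b - 1 - digit b (u j) (n - 1 - i).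
Proof.
move=> j_lt i_lt.
have -> : n * K - 1 - (n * j + i) = n * (K - 1 - j) + (n - 1 - i) by nia.
rewrite digit_block //; last by lia.
have uj_lt : u j < b ^ n by rewrite nth_digits // digit_lt // ltnW.
rewrite -[digit (b ^ n) m _]nth_digits // antipalindromic_mirror //.
by rewrite digit_complement //; lia.
Qed.

Lemma antipalindromic_blocksP :
  antipalindromic b m <->
  forall j i, j < K -> i < n -> digit b (u j) i = digit b (u j) (n - 1 - i).
Proof.
have digit_m j i : i < n -> digit b m (n * j + i) = digit b (u j) i.
  by move=> i_lt; rewrite digit_block // nth_digits.
have digit_lt_b x t : digit b x t < b by exact: digit_lt.
rewrite /antipalindromic size_digits_power_base.
split=> [anti j i j_lt i_lt | blocks t t_lt].
  have idx_lt : n * j + i < n * K by nia.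
  have := anti _ idx_lt; rewrite !(nth_digits b_gt1) digit_mirror // digit_m //.
  by have := digit_lt_b (u j) (n - 1 - i); lia.
have i_lt : t %% n < n by rewrite ltn_pmod.
have j_lt : t %/ n < K by rewrite ltn_divLR // mulnC.
rewrite (divn_eq t n) mulnC !(nth_digits b_gt1) digit_mirror // digit_m //.
rewrite blocks //.
by have := digit_lt_b (u (t %/ n)) (n - 1 - t %% n); lia.
Qed.

End PowerBase.

Theorem mainTheorem17 (b n m : nat) :
  2 <= b -> 1 <= n ->
  antipalindromic (b ^ n) m ->
  b ^ (n - 1) <= nth 0 (digits (b ^ n) m) (size (digits (b ^ n) m) - 1) ->
  (antipalindromic b m <->
   forall j, j < size (digits (b ^ n) m) ->
     palindrome (padded_digits b n (nth 0 (digits (b ^ n) m) j))).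
Proof.
move=> b_gt1 n_gt0 m_anti top_digit_ge.
rewrite (antipalindromic_blocksP b_gt1 n_gt0 m_anti top_digit_ge).
split=> [blocks j j_lt | palindromes j i j_lt].
- by apply/palindrome_padded_digitsP => i; apply: blocks.
- by move: i; apply/palindrome_padded_digitsP/palindromes.
Qed.
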